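(* For every $n\ge1$, $\mathcal{S}_n(0121,0132)=\mathcal{S}_n(0121,1032)=\mathcal{S}_n(0121,0132,1032)$.
   Context: An ascent sequence of length $n$ is a sequence $x_1\cdots x_n$ of non-negative integers with $x_1=0$ and $x_i\le 1+\#\{j<i-1: x_j<x_{j+1}\}$ for $1<i\le n$ (i.e. at most one more than the number of ascents among the first $i-1$ letters). A sequence $\pi$ contains a pattern $\tau$ (a sequence of non-negative integers) if some subsequence of $\pi$ is order-isomorphic to $\tau$ (same relative order, equal letters to equal letters); otherwise it avoids $\tau$. $\mathcal{S}_n(T)$ is the set of ascent sequences of length $n$ avoiding all patterns in $T$. *)

From mathcomp Require Import all_boot.
Set Implicit Arguments. Unset Strict Implicit. Unset Printing Implicit Defensive.

Definition asc (s : seq nat) : nat :=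
  count (fun j => nth 0 s j < nth 0 s j.+1) (iota 0 (size s).-1).

(* ascent sequence (0-indexed): s_0 = 0 and for 0 < i < size s,
   s_i <= 1 + asc (s_0 ... s_{i-1}).  The empty sequence is vacuously allowed
   (only used for n >= 1 anyway). *)
Definition is_ascent_seq (s : seq nat) : bool :=
  (if s is x :: _ then x == 0 else true) &&
  all (fun i => nth 0 s i <= (asc (take i s)).+1) (iota 1 (size s).-1).

(* order isomorphism: same length, same relative order of all pairs
   (this also forces equal letters to correspond to equal letters) *)
Definition order_iso (s t : seq nat) : bool :=
  (size s == size t) &&
  all (fun i => all (fun j => (nth 0 s i < nth 0 s j) == (nth 0 t i < nth 0 t j))
                    (iota 0 (size s)))
      (iota 0 (size s)).

Definition contains (s p : seq nat) : Prop :=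
  exists m : bitseq, size m = size s /\ order_iso (mask m s) p.

Definition avoids_all (s : seq nat) (T : seq (seq nat)) : Prop :=
  forall p, p \in T -> ~ contains s p.

Definition in_S (n : nat) (T : seq (seq nat)) (s : seq nat) : Prop :=
  [/\ size s = n, is_ascent_seq s & avoids_all s T].

From mathcomp Require Import all_boot zify.

(* An ascent sequence starts with 0, so an occurrence [b a d c] of 1032
   (b < a < d < c) extends to the occurrence [0 a d c] of 0132.
   Conversely, let [a b d c] be an occurrence of 0132 (a < b < c < d) and let
   f be the first position where the sequence reaches c.  A descent before f,
   followed by d c, is an occurrence of 1032.  Otherwise the prefix before f
   is weakly increasing, so it has at most [s_(f-1)] ascents; the ascent
   condition then forces [s_f = c], and [0 s_f d c] is an occurrence of 0121. *)

Lemma order_isoP (s t : seq nat) :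
  order_iso s t <->
  size s = size t /\ forall i j, i < size s -> j < size s ->
    (nth 0 s i < nth 0 s j) = (nth 0 t i < nth 0 t j).
Proof.
split.
  move=> /andP[/eqP sz /allP iso]; split=> // i j ltis ltjs.
  have := iso i; rewrite mem_iota => /(_ ltis) /allP /(_ j).
  by rewrite mem_iota => /(_ ltjs) /eqP.
move=> [sz iso]; apply/andP; split; first by rewrite sz.
apply/allP=> i; rewrite mem_iota => ltis; apply/allP=> j; rewrite mem_iota.
by move=> ltjs; apply/eqP/iso.
Qed.

Lemma subseq_iotaP (n : nat) (ix : seq nat) :
  subseq ix (iota 0 n) <-> sorted ltn ix /\ all (gtn n) ix.
Proof.
split.
  move=> sub; split; first exact: (subseq_sorted ltn_trans sub (iota_ltn_sorted 0 n)).
  by apply/allP=> i /(mem_subseq sub); rewrite mem_iota.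
move=> [sorted_ix /allP lt_ix]; apply/subseq_uniqP; first exact: iota_uniq.
apply: (irr_sorted_eq ltn_trans ltnn) => //.
  exact: (sorted_filter ltn_trans _ (iota_ltn_sorted 0 n)).
move=> i; rewrite mem_filter mem_iota /=.
by case: (boolP (i \in ix)) => [/lt_ix|]; rewrite ?andbF.
Qed.

Lemma containsP (s p : seq nat) :
  contains s p <->
  exists2 ix, subseq ix (iota 0 (size s)) & order_iso [seq nth 0 s i | i <- ix] p.
Proof.
have mask_nth m : mask m s = [seq nth 0 s i | i <- mask m (iota 0 (size s))].
  by rewrite map_mask -/(mkseq _ _) mkseq_nth.
split=> [[m [_ iso]] | [ix /subseqP[m sz_m ->] iso]].
  by exists (mask m (iota 0 (size s))); [exact: mask_subseq | rewrite -mask_nth].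
by exists m; split; [rewrite sz_m size_iota | rewrite mask_nth].
Qed.

Lemma contains_size4 (s p : seq nat) : size p = 4 ->
  contains s p <->
  exists i j k l, [/\ i < j < k, k < l < size s &
    order_iso [:: nth 0 s i; nth 0 s j; nth 0 s k; nth 0 s l] p].
Proof.
move=> sz_p; rewrite containsP; split.
  move=> [ix /subseq_iotaP[incr lt_n] iso].
  have /andP[/eqP] := iso; rewrite size_map sz_p.
  case: ix incr lt_n iso => [|i [|j [|k [|l [|? ?]]]]] //= incr lt_n iso _ _.
  by exists i, j, k, l; split=> //; lia.
move=> [i [j [k [l [ijk kl iso]]]]]; exists [:: i; j; k; l] => //.
by apply/subseq_iotaP => /=; lia.
Qed.

Lemma order_iso_1032 (a b c d : nat) :
  order_iso [:: a; b; c; d] [:: 1; 0; 3; 2] <-> [/\ b < a, a < d & d < c].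
Proof.
rewrite order_isoP; split=> [[_ iso] | [? ? ?]].
  have /= ba := iso 1 0 erefl erefl; have /= ad := iso 0 3 erefl erefl.
  by have /= dc := iso 3 2 erefl erefl; split; lia.
by split=> // -[|[|[|[|i]]]] [|[|[|[|j]]]] //= _ _; lia.
Qed.

Lemma order_iso_0132 (a b c d : nat) :
  order_iso [:: a; b; c; d] [:: 0; 1; 3; 2] <-> [/\ a < b, b < d & d < c].
Proof.
rewrite order_isoP; split=> [[_ iso] | [? ? ?]].
  have /= ab := iso 0 1 erefl erefl; have /= bd := iso 1 3 erefl erefl.
  by have /= dc := iso 3 2 erefl erefl; split; lia.
by split=> // -[|[|[|[|i]]]] [|[|[|[|j]]]] //= _ _; lia.
Qed.

Lemma order_iso_0121 (a b c : nat) :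
  a < b < c -> order_iso [:: a; b; c; b] [:: 0; 1; 2; 1].
Proof.
move=> ord; apply/order_isoP; split=> // -[|[|[|[|i]]]] [|[|[|[|j]]]] //= _ _.
all: lia.
Qed.

Lemma asc_cons2 (x y : nat) (t : seq nat) :
  asc [:: x, y & t] = (x < y) + asc (y :: t).
Proof.
rewrite /asc /=; congr (_ + _).
by rewrite -[in iota 1 _](addn0 1) iotaDl count_map.
Qed.

Lemma asc_sorted_leq (x : nat) (t : seq nat) :
  sorted leq (x :: t) -> asc (x :: t) + x <= last x t.
Proof.
elim: t x => [|y t IHt] x //= /andP[le_xy path_t].
by rewrite asc_cons2; have := IHt y path_t; lia.
Qed.

Lemma ascent_seq_head (s : seq nat) : is_ascent_seq s -> nth 0 s 0 = 0.
Proof. by case: s => [|x s] //= /andP[/eqP]. Qed.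

Lemma ascent_seq_le (s : seq nat) (i : nat) : is_ascent_seq s ->
  0 < i < size s -> nth 0 s i <= (asc (take i s)).+1.
Proof. by move=> /andP[_ /allP bound] lt_i; apply: bound; rewrite mem_iota; lia. Qed.

(* Since an ascent sequence starts with 0, a weakly increasing prefix has at
   most as many ascents as its last letter. *)
Lemma ascent_seq_sorted_prefix (s : seq nat) (f : nat) : is_ascent_seq s ->
  0 < f < size s -> sorted leq (take f s) -> nth 0 s f <= (nth 0 s f.-1).+1.
Proof.
move=> s_asc lt_f sorted_pre.
have prefixE : take f s = nth 0 s 0 :: take f.-1 (drop 1 s).
  by case: s s_asc lt_f sorted_pre => [|x s] //=; case: f => //= f; rewrite drop0.
have lastE : last (nth 0 s 0) (take f.-1 (drop 1 s)) = nth 0 s f.-1.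
  rewrite (last_nth 0) -prefixE size_take size_drop.
  by rewrite ifT ?nth_take; lia.
have := ascent_seq_le _ _ s_asc lt_f; rewrite prefixE in sorted_pre *.
by have := asc_sorted_leq _ _ sorted_pre; rewrite lastE; lia.
Qed.

Lemma ascent_seq_first_reach (s : seq nat) (c : nat) :
  is_ascent_seq s -> 0 < c -> has (leq c) s ->
  let f := find (leq c) s in
  (exists2 x, x.+1 < f & nth 0 s x.+1 < nth 0 s x) \/ nth 0 s f = c.
Proof.
move=> s_asc c_pos has_c f.
have c_le_f : c <= nth 0 s f := nth_find 0 has_c.
have f_pos : 0 < f.
  by move: c_le_f; rewrite lt0n; apply: contraTneq => ->; rewrite ascent_seq_head // -ltnNge.
have lt_f : 0 < f < size s by rewrite f_pos -has_find.
have below_c : nth 0 s f.-1 < c.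
  by rewrite ltnNge; apply/negbT/before_find; rewrite prednK.
have [/hasP[x] | /hasPn no_descent] :=
  boolP (has (fun x => nth 0 s x.+1 < nth 0 s x) (iota 0 f.-1)).
  by rewrite mem_iota => lt_x descent; left; exists x => //; lia.
right; apply/eqP; rewrite eqn_leq c_le_f andbT.
suff sorted_pre : sorted leq (take f s).
  by have := ascent_seq_sorted_prefix _ _ s_asc lt_f sorted_pre; lia.
have le_f : f <= size s by rewrite ltnW // -has_find.
apply/(sortedP 0) => x; rewrite size_takel // => lt_x.
rewrite !nth_take ?(ltn_trans (ltnSn x)) // leqNgt.
by apply: no_descent; rewrite mem_iota; lia.
Qed.

Lemma ascent_seq_contains_1032_0132 (s : seq nat) : is_ascent_seq s ->
  contains s [:: 1; 0; 3; 2] -> contains s [:: 0; 1; 3; 2].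
Proof.
move=> s_asc /(contains_size4 s [:: 1; 0; 3; 2] erefl).
move=> [i [j [k [l [ijk kl /order_iso_1032 [ba ad dc]]]]]].
have i_pos : 0 < i.
  by rewrite lt0n; apply: contraTneq ba => i0; rewrite i0 ascent_seq_head.
apply/(contains_size4 s [:: 0; 1; 3; 2] erefl); exists 0, i, k, l.
rewrite ascent_seq_head //; split; try lia.
by apply/order_iso_0132; split; lia.
Qed.

Lemma ascent_seq_contains_0132_1032 (s : seq nat) : is_ascent_seq s ->
  ~ contains s [:: 0; 1; 2; 1] ->
  contains s [:: 0; 1; 3; 2] -> contains s [:: 1; 0; 3; 2].
Proof.
move=> s_asc no_0121 /(contains_size4 s [:: 0; 1; 3; 2] erefl).
move=> [i [j [k [l [ijk kl /order_iso_0132 [ab bd dc]]]]]].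
move: bd dc; move def_c: (nth 0 s l) => c bd dc.
have lt_k : k < size s by lia.
have has_c : has (leq c) s by apply/hasP; exists (nth 0 s k); [exact: mem_nth | lia].
have f_le_k : find (leq c) s <= k.
  by rewrite leqNgt; apply/negP => /(before_find 0) /=; rewrite (ltnW dc).
have c_pos : 0 < c by lia.
have [[x lt_x descent] | reach_c] := ascent_seq_first_reach _ _ s_asc c_pos has_c.
  have below_c : nth 0 s x < c.
    by rewrite ltnNge; apply: negbT; apply: (before_find 0); lia.
  apply/(contains_size4 s [:: 1; 0; 3; 2] erefl); exists x, x.+1, k, l.
  by split; [lia | lia | apply/order_iso_1032; rewrite def_c].
have f_pos : 0 < find (leq c) s.
  by rewrite lt0n; apply/eqP => f0; move: reach_c bd; rewrite f0 ascent_seq_head //; lia.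
have f_lt_k : find (leq c) s < k.
  by rewrite ltn_neqAle f_le_k andbT; apply/eqP => fk; move: dc; rewrite -fk reach_c ltnn.
case: no_0121; apply/(contains_size4 s [:: 0; 1; 2; 1] erefl).
exists 0, (find (leq c) s), k, l; rewrite ascent_seq_head // reach_c def_c.
by split; [lia | lia | apply: order_iso_0121; lia].
Qed.

Lemma avoids_all_cons (s p : seq nat) (T : seq (seq nat)) :
  avoids_all s (p :: T) <-> ~ contains s p /\ avoids_all s T.
Proof.
split=> [av | [no_p av] q].
  by split=> [|q q_T]; apply: av; rewrite inE ?q_T ?eqxx ?orbT.
by rewrite inE => /orP[/eqP -> | /av].
Qed.

Lemma ascent_seq_contains_0132_1032_iff (s : seq nat) : is_ascent_seq s ->
  ~ contains s [:: 0; 1; 2; 1] ->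
  contains s [:: 0; 1; 3; 2] <-> contains s [:: 1; 0; 3; 2].
Proof.
move=> s_asc no_0121.
by split; [exact: ascent_seq_contains_0132_1032 | exact: ascent_seq_contains_1032_0132].
Qed.

Theorem mainTheorem4 (n : nat) (hn : 1 <= n) :
  (forall s : seq nat,
     in_S n [:: [:: 0; 1; 2; 1]; [:: 0; 1; 3; 2]] s <->
     in_S n [:: [:: 0; 1; 2; 1]; [:: 1; 0; 3; 2]] s) /\
  (forall s : seq nat,
     in_S n [:: [:: 0; 1; 2; 1]; [:: 1; 0; 3; 2]] s <->
     in_S n [:: [:: 0; 1; 2; 1]; [:: 0; 1; 3; 2]; [:: 1; 0; 3; 2]] s).
Proof.
split=> s; split=> -[sz s_asc /avoids_all_cons[no_0121 /avoids_all_cons[no_p av]]];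
  have swap := ascent_seq_contains_0132_1032_iff _ s_asc no_0121;
  split=> //; apply/avoids_all_cons; split=> //; apply/avoids_all_cons.
- by rewrite -swap.
- by rewrite swap.
- by split; [rewrite swap | apply/avoids_all_cons].
Qed.
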